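(* In the setting described in the context, $R_{t\infty}\ge R_{s\infty}$ (almost surely) for all $t\ge s\ge0$.
   Context: Let $(\Omega,\mathcal F,\mathbb P)$ be a probability space with a filtration $\{\mathcal F_t\}_{t\ge0}$ satisfying the usual conditions; (in)equalities between random variables hold a.s. A pricing kernel is an $\{\mathcal F_t\}$-adapted càdlàg semimartingale $\{\pi_t\}_{t\ge0}$ with (a) $\pi_t>0$, (b) $\mathbb E[\pi_t]<\infty$ for all $t\ge0$, (c) $\liminf_{t\to\infty}\mathbb E[\pi_t]=0$. Fix such a pricing kernel and set $P_{tT}=\pi_t^{-1}\mathbb E[\pi_T\mid\mathcal F_t]$ for $0\le t<T$. The exponential rate is $R_{tT}=-(T-t)^{-1}\ln P_{tT}$. For a family $\{A_x\}_{x\in\mathbb R^+}$ of $\mathcal F_t$-measurable extended-real random variables, $\limsup_{x\to\infty}A_x:=\operatorname{ess\,inf}_{x}\operatorname{ess\,sup}_{y\ge x}A_y$, with essential supremum/infimum taken among $\mathcal F_t$-measurable random variables. The long exponential rate is $R_{t\infty}=\limsup_{T\to\infty}R_{tT}$. *)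

From HB Require Import structures.
From mathcomp Require Import all_boot all_order all_algebra.
From mathcomp Require Import all_classical all_reals all_analysis.
From mathcomp Require Import measurable_realfun.
Set Implicit Arguments. Unset Strict Implicit. Unset Printing Implicit Defensive.
Import Order.TTheory GRing.Theory Num.Theory.
Import numFieldNormedType.Exports.
Local Open Scope classical_set_scope.
Local Open Scope ring_scope.

Section Defs.
Context (R : realType) (d : measure_display) (Omega : measurableType d)
        (P : probability Omega R).

Definition G_measurable (G : set (set Omega)) (f : Omega -> R) :=
  forall B : set R, measurable B -> G (f @^-1` B).
Definition G_emeasurable (G : set (set Omega)) (f : Omega -> \bar R) :=
  forall B : set (\bar R), measurable B -> G (f @^-1` B).

(* a filtration {F_t}_{t >= 0} of sub-sigma-algebras of the measurable sets
   satisfying the usual conditions (right-continuity and completeness: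
   F_0 contains every P-negligible set, hence so does F) *)
Definition usual_filtration (F : R -> set (set Omega)) :=
  [/\ forall t, 0 <= t -> sigma_algebra setT (F t),
      forall t, 0 <= t -> F t `<=` measurable,
      forall s t, 0 <= s -> s <= t -> F s `<=` F t,
      forall t, 0 <= t -> forall A, (forall u, t < u -> F u A) -> F t A
    & forall N, P.-negligible N -> F 0 N].

Definition adapted (F : R -> set (set Omega)) (X : R -> Omega -> R) :=
  forall t, 0 <= t -> G_measurable (F t) (X t).

Definition cadlag (X : R -> Omega -> R) :=
  forall w, (forall t, 0 <= t -> (X x w @[x --> t^'+]) --> X t w) /\
            (forall t, 0 < t -> cvg (X x w @[x --> t^'-])).

Definition stopping_time (F : R -> set (set Omega)) (tau : Omega -> \bar R) :=
  (forall w, (0 <= tau w)%E) /\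
  (forall t, 0 <= t -> F t [set w | (tau w <= t%:E)%E]).

Definition stopped (tau : Omega -> \bar R) (X : R -> Omega -> R) : R -> Omega -> R :=
  fun t w => X (match tau w with EFin r => Order.min t r | _ => t end) w.

Definition martingale (F : R -> set (set Omega)) (M : R -> Omega -> R) :=
  [/\ adapted F M,
      forall t, 0 <= t -> P.-integrable setT (EFin \o M t)
    & forall s t, 0 <= s -> s <= t -> forall A, F s A ->
        (\int[P]_(w in A) (M t w)%:E = \int[P]_(w in A) (M s w)%:E)%E].

Definition local_martingale (F : R -> set (set Omega)) (M : R -> Omega -> R) :=
  [/\ adapted F M, cadlag M, (forall w, M 0 w = 0) &
    exists tau : nat -> Omega -> \bar R,
      [/\ forall n, stopping_time F (tau n),
          forall n w, (tau n w <= tau n.+1 w)%E,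
          (\forall w \ae P, (tau n w @[n --> \oo] --> +oo%E))
        & forall n, martingale F (stopped (tau n) M)]].

Definition finite_variation_process (F : R -> set (set Omega)) (A : R -> Omega -> R) :=
  [/\ adapted F A, cadlag A, (forall w, A 0 w = 0) &
      forall w t, 0 <= t -> bounded_variation 0 t (fun u => A u w)].

Definition semimartingale (F : R -> set (set Omega)) (X : R -> Omega -> R) :=
  [/\ adapted F X, cadlag X &
    exists M A, [/\ local_martingale F M, finite_variation_process F A &
      forall t w, 0 <= t -> X t w = X 0 w + M t w + A t w]].

Definition expectation (X : Omega -> R) : \bar R := (\int[P]_w (X w)%:E)%E.

Definition pricing_kernel (F : R -> set (set Omega)) (pi : R -> Omega -> R) :=
  [/\ semimartingale F pi,
      forall t w, 0 <= t -> 0 < pi t w,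
      forall t, 0 <= t -> P.-integrable setT (EFin \o pi t)
    & ereal_sup [set ereal_inf [set expectation (pi u) | u in [set u | M <= u /\ 0 <= u]]
                 | M in [set: R]] = 0%E].

Definition cond_exp_version (G : set (set Omega)) (X Y : Omega -> R) :=
  [/\ G_measurable G Y, P.-integrable setT (EFin \o Y) &
      forall A, G A -> (\int[P]_(w in A) (Y w)%:E = \int[P]_(w in A) (X w)%:E)%E].

Definition is_ess_sup (G : set (set Omega)) (I : set R) (A : R -> Omega -> \bar R)
    (Y : Omega -> \bar R) :=
  [/\ G_emeasurable G Y,
      forall y, I y -> \forall w \ae P, (A y w <= Y w)%E
    & forall Z, G_emeasurable G Z -> (forall y, I y -> \forall w \ae P, (A y w <= Z w)%E) ->
        \forall w \ae P, (Y w <= Z w)%E].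

Definition is_ess_inf (G : set (set Omega)) (I : set R) (A : R -> Omega -> \bar R)
    (Y : Omega -> \bar R) :=
  [/\ G_emeasurable G Y,
      forall y, I y -> \forall w \ae P, (Y w <= A y w)%E
    & forall Z, G_emeasurable G Z -> (forall y, I y -> \forall w \ae P, (Z w <= A y w)%E) ->
        \forall w \ae P, (Z w <= Y w)%E].

(* limsup_{x -> oo} A_x := ess inf_{x in R^+} ess sup_{y >= x} A_y, where the
   family is only defined for indices in D *)
Definition is_ess_limsup (G : set (set Omega)) (D : set R) (A : R -> Omega -> \bar R)
    (L : Omega -> \bar R) :=
  exists S : R -> Omega -> \bar R,
    (forall x, 0 <= x -> is_ess_sup G (D `&` [set y | x <= y]) A (S x)) /\
    is_ess_inf G [set x | 0 <= x] S L.

(* exponential rate R_{tT} = -(T-t)^{-1} ln P_{tT}, with P_{tT} = pi_t^{-1} C,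
   C a version of E[pi_T | F_t] *)
Definition exp_rate (pi : R -> Omega -> R) (C : Omega -> R) (t T : R) : Omega -> R :=
  fun w => - (T - t)^-1 * ln ((pi t w)^-1 * C w).

Definition long_rate (F : R -> set (set Omega)) (pi : R -> Omega -> R)
    (C : R -> R -> Omega -> R) (t : R) (L : Omega -> \bar R) :=
  is_ess_limsup (F t) [set T | t < T] (fun T w => (exp_rate pi (C t T) t T w)%:E) L.

End Defs.

From HB Require Import structures.
From mathcomp Require Import all_boot all_order all_algebra.
From mathcomp Require Import all_classical all_reals all_analysis.
From mathcomp Require Import measurable_realfun.
From mathcomp Require Import lra.
Set Implicit Arguments. Unset Strict Implicit. Unset Printing Implicit Defensive.
Import Order.TTheory GRing.Theory Num.Theory.
Import numFieldNormedType.Exports.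
Local Open Scope classical_set_scope.
Local Open Scope ring_scope.

(* R_{t oo} is the largest F_t-measurable a.s. lower bound of the
   essential suprema S_x of R_{tT} over T >= x, and R_{s oo} is F_s-, hence
   F_t-measurable, so it suffices to show R_{s oo} <= X a.s. for every
   F_t-measurable X dominating R_{tT} for all large T.  Suppose
   X < q < q' < R_{s oo} on E `&` B with E in F_s and B in F_t.  On the F_s-event
   W where E[pi_t 1_B | F_s] >= dl pi_s, the tower property
   pi_s P_{sT} = E[pi_t P_{tT} | F_s] >= dl pi_s exp(-(T - t) q) forces
   R_{sT} < q'' for every q'' in (q, q') and all large T, so R_{s oo} <= q'' on W
   and W `&` E is negligible.  Hence the integral of pi_t over E `&` B is at most
   dl E[pi_s] for every dl > 0, and pi_t > 0 gives P(E `&` B) = 0.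
   Conditional expectations only enter through integrals over F_s-events: W comes
   from a Hahn decomposition, on F_s, of A |-> int_{A & B} pi_t - dl int_A pi_s. *)

(* [T] with the sub-sigma-algebra [G] as its measurable sets *)
Definition subsigma d (T : measurableType d) (G : set (set T))
  (HG : sigma_algebra setT G) : Type := T.

Section subsigma.
Context d (T : measurableType d) (G : set (set T)) (HG : sigma_algebra setT G).
Local Notation subsigma := (subsigma HG).

HB.instance Definition _ := Pointed.on subsigma.

Let G0 : G set0. Proof. by case: HG. Qed.
Let GC : forall A, G A -> G (~` A).
Proof. by case: HG => _ h _ A /h; rewrite setTD. Qed.
Let GU : forall A : (set subsigma)^nat, (forall i, G (A i)) -> G (\bigcup_i A i).
Proof. by case: HG. Qed.

HB.instance Definition _ :=
  @isMeasurable.Build default_measure_display subsigma G G0 GC GU.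

Lemma G_measurableP (R : realType) (f : T -> R) :
  G_measurable G f <-> measurable_fun [set: subsigma] (f : subsigma -> R).
Proof.
split=> [Gf _ B mB|mf B mB]; first by rewrite setTI; exact: Gf.
by rewrite -[_ @^-1` _]setTI; exact: mf.
Qed.

Lemma G_emeasurableP (R : realType) (f : T -> \bar R) :
  G_emeasurable G f <-> measurable_fun [set: subsigma] (f : subsigma -> \bar R).
Proof.
split=> [Gf _ B mB|mf B mB]; first by rewrite setTI; exact: Gf.
by rewrite -[_ @^-1` _]setTI; exact: mf.
Qed.

Section Hahn.
Context (R : realType) (GM : G `<=` measurable) (nu : {charge set T -> \bar R}).

Let subnu (A : set subsigma) : \bar R := nu A.
Let subnu0 : subnu set0 = 0%E. Proof. exact: charge0. Qed.
Let subnu_fin A : G A -> subnu A \is a fin_num.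
Proof. by move=> /GM mA; exact: fin_num_measure. Qed.
Let subnu_sigma_additive : semi_sigma_additive subnu.
Proof.
move=> A mA tA mU; apply: charge_semi_sigma_additive => //.
- by move=> i; exact/GM/mA.
- exact: GM.
Qed.
HB.instance Definition _ :=
  isCharge.Build _ subsigma R subnu subnu0 subnu_fin subnu_sigma_additive.

Lemma Hahn_decomposition_sub : exists W, [/\ G W,
  (forall A, G A -> A `<=` W -> (0 <= nu A)%E) &
  (forall A, G A -> A `<=` ~` W -> (nu A <= 0)%E)].
Proof.
have [W [N [[mW posW] [mN negN] WN _]]] := Hahn_decomposition subnu.
exists W; split => // A GA AnW; apply: (negN A GA) => w /AnW nWw.
have : (W `|` N) w by rewrite WN.
by case.
Qed.

End Hahn.
End subsigma.

Lemma integral_gt0_le0_null d (T : measurableType d) (R : realType)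
    (mu : {measure set T -> \bar R}) (A : set T) (f : T -> R) :
  measurable A -> measurable_fun A (EFin \o f) -> (forall w, A w -> 0 < f w) ->
  (\int[mu]_(w in A) (f w)%:E <= 0)%E -> mu A = 0%E.
Proof.
move=> mA mf f_gt0 le0.
have int_abs0 : (\int[mu]_(w in A) `|(EFin \o f) w| = 0)%E.
  have -> : (\int[mu]_(w in A) `|(EFin \o f) w| = \int[mu]_(w in A) (f w)%:E)%E.
    by apply: eq_integral => w /set_mem Aw /=; rewrite ger0_norm // ltW ?f_gt0.
  by apply/eqP; rewrite eq_le le0 integral_ge0 // => w Aw; rewrite lee_fin ltW ?f_gt0.
have [N [mN N0 AN]] := (ae_eq_integral_abs mu mA mf).1 int_abs0.
apply/eqP; rewrite eq_le measure_ge0 andbT -N0; apply: le_measure; rewrite ?inE //.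
move=> w Aw; apply: AN => /= /(_ Aw) [] f0.
by have := f_gt0 w Aw; rewrite f0 ltxx.
Qed.

Lemma exp_rate_ltE (R : realType) (c p y a : R) : 0 < c -> 0 < p -> 0 < y ->
  (- c^-1 * ln (p^-1 * y) < a) = (expR (- c * a) * p < y).
Proof.
move=> c0 p0 y0.
rewrite mulNr ltrNl ltr_pdivlMl // mulrN -mulNr -[X in X = _]ltr_expR lnK; last first.
  by rewrite posrE mulr_gt0 // invr_gt0.
by rewrite [p^-1 * y]mulrC ltr_pdivlMr.
Qed.

Lemma le0_of_le_small_mul (R : realFieldType) (x c : R) : 0 <= c ->
  (forall e, 0 < e -> x <= e * c) -> x <= 0.
Proof.
move=> c0 small; apply/ler_addgt0Pr => e e0; rewrite add0r.
have c1 : 0 < c + 1 by lra.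
apply: le_trans (small (e / (c + 1)) (divr_gt0 e0 c1)) _.
by rewrite mulrAC ler_pdivrMr // ler_pM2l //; lra.
Qed.

Lemma expR_gap_eventually (R : realType) (s t q q' e : R) : q < q' -> 0 < e ->
  exists x0, forall T, x0 <= T -> expR (- (T - s) * q') < e * expR (- (T - t) * q).
Proof.
move=> qq' e0; exists ((s * q' - t * q - ln e) / (q' - q) + 1) => T xT.
have dq : 0 < q' - q by rewrite subr_gt0.
have gap : s * q' - t * q - ln e < T * (q' - q) by rewrite -ltr_pdivrMr //; lra.
rewrite -[X in X * expR _](lnK e0) -expRD ltr_expR; nra.
Qed.

Lemma lte_ratr_between (R : realType) (x y : \bar R) : (x < y)%E ->
  exists a b : rat, [/\ (x < (ratr a)%:E)%E, ratr a < ratr b :> R & ((ratr b)%:E < y)%E].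
Proof.
move=> xy.
have [p [p' [xp pp' p'y]]] :
    exists p p' : R, [/\ (x <= p%:E)%E, p < p' & (p'%:E <= y)%E].
  case: x xy => [r| |]; case: y => [u| |] //=.
  - by rewrite lte_fin => ru; exists r, u.
  - by move=> _; exists r, (r + 1); split => //; [lra | rewrite leey].
  - by move=> _; exists (u - 1), u; split => //; [rewrite leNye | lra].
  - by move=> _; exists 0, 1; split; [exact: leNye | exact: ltr01 | exact: leey].
have [a] := rat_in_itvoo pp'; rewrite in_itv /= => /andP[pa ap'].
have [b] := rat_in_itvoo ap'; rewrite in_itv /= => /andP[ab bp'].
exists a, b; split => //.
- by apply: le_lt_trans xp _; rewrite lte_fin.
- by apply: lt_le_trans p'y; rewrite lte_fin.
Qed.

Lemma ae_le_of_rat_gaps d (T : measurableType d) (R : realType)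
    (mu : {measure set T -> \bar R}) (X Y : T -> \bar R) :
  (forall a b : rat, ratr a < ratr b :> R ->
     \forall w \ae mu, ~ ((X w < (ratr a)%:E)%E /\ ((ratr b)%:E < Y w)%E)) ->
  \forall w \ae mu, (Y w <= X w)%E.
Proof.
move=> gap.
have : forall m : nat, \forall w \ae mu,
    if @pickle_inv (rat * rat)%type m is Some (a, b) then ratr a < ratr b :> R ->
      ~ ((X w < (ratr a)%:E)%E /\ ((ratr b)%:E < Y w)%E)
    else True.
  move=> m; case: pickle_inv => [[a b]|]; last exact: aeW.
  have [ab|_] := ltP (ratr a) (ratr b : R); last exact: aeW.
  by apply: filterS (gap a b ab) => w + _.
move=> /ae_foralln; apply: filterS => w gapw.
rewrite leNgt; apply/negP => /lte_ratr_between [a [b [Xa ab bY]]].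
by have := gapw (pickle (a, b)); rewrite pickleK_inv => /(_ ab); apply.
Qed.

Lemma is_ess_limsup_le_on (R : realType) d (Omega : measurableType d)
    (P : probability Omega R) (G : set (set Omega)) (HG : sigma_algebra setT G)
    (D : set R) (A : R -> Omega -> \bar R) (L : Omega -> \bar R)
    (V : set Omega) (x0 : R) (c : \bar R) :
  is_ess_limsup P G D A L -> G V -> 0 <= x0 ->
  (forall y, D y -> x0 <= y -> \forall w \ae P, V w -> (A y w <= c)%E) ->
  \forall w \ae P, V w -> (L w <= c)%E.
Proof.
move=> [S [S_sup [_ L_lb _]]] GV x00 A_le.
have [mS S_ub S_least] := S_sup x0 x00.
pose Z w := if w \in V then c else S x0 w.
have mZ : G_emeasurable G Z.
  apply/(G_emeasurableP HG)/measurable_fun_ifT; last exact/(G_emeasurableP HG).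
    apply: (measurable_fun_bool true); rewrite setTI.
    rewrite (_ : _ @^-1` _ = V) //.
    by apply/seteqP; split => w /=; [move/set_mem | move/mem_set].
  exact: measurable_cst.
have Z_ub y : (D `&` [set y | x0 <= y]) y -> \forall w \ae P, (A y w <= Z w)%E.
  move=> [Dy x0y]; apply: filterS2 (A_le y Dy x0y) (S_ub y (conj Dy x0y)).
  by move=> w AVc AS; rewrite /Z; case: ifPn => [/set_mem /AVc|].
apply: filterS2 (S_least Z mZ Z_ub) (L_lb x0 x00) => w SZ LS Vw.
by apply: le_trans LS _; move: SZ; rewrite /Z ifT ?inE.
Qed.

Section pricing_kernel.
Context (R : realType) d (Omega : measurableType d) (P : probability Omega R)
  (F : R -> set (set Omega)) (pi : R -> Omega -> R) (C : R -> R -> Omega -> R).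
Hypotheses (hF : usual_filtration P F) (hpk : pricing_kernel P F pi)
  (hC : forall t T, 0 <= t -> t < T -> cond_exp_version P (F t) (pi T) (C t T)).

Let F_sigma t : 0 <= t -> sigma_algebra setT (F t).
Proof. by case: hF => + _ _ _ _; exact. Qed.
Let F_measurable t : 0 <= t -> F t `<=` measurable.
Proof. by case: hF => _ + _ _ _; exact. Qed.
Let F_mono s t : 0 <= s -> s <= t -> F s `<=` F t.
Proof. by case: hF => _ _ + _ _; exact. Qed.
Let F_setI t A B : 0 <= t -> F t A -> F t B -> F t (A `&` B).
Proof. by move=> t0; exact: (@measurableI _ (subsigma (F_sigma t0))). Qed.
Let F_setD t A B : 0 <= t -> F t A -> F t B -> F t (A `\` B).
Proof. by move=> t0; exact: (@measurableD _ (subsigma (F_sigma t0))). Qed.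

Let pi_gt0 t w : 0 <= t -> 0 < pi t w.
Proof. by case: hpk => _ + _ _ t0; exact. Qed.
Let pi_adapted t : 0 <= t -> G_measurable (F t) (pi t).
Proof. by case: hpk => -[+ _ _] _ _ _; exact. Qed.
Let pi_integrable t D : 0 <= t -> measurable D -> P.-integrable D (EFin \o pi t).
Proof. by case: hpk => _ _ + _ t0 mD; move/(_ t t0); exact: integrableS. Qed.
Let integral_pi_ge0 t D : 0 <= t -> (0 <= \int[P]_(w in D) (pi t w)%:E)%E.
Proof. by move=> t0; apply: integral_ge0 => w _; rewrite lee_fin ltW ?pi_gt0. Qed.
Let integral_pi_subset t A B : 0 <= t -> measurable A -> measurable B -> A `<=` B ->
  (\int[P]_(w in A) (pi t w)%:E <= \int[P]_(w in B) (pi t w)%:E)%E.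
Proof.
move=> t0 mA mB AB; apply: ge0_subset_integral => //.
- exact: measurable_int (pi_integrable t0 mB).
- by move=> w _; rewrite lee_fin ltW ?pi_gt0.
Qed.

Let C_adapted t T : 0 <= t -> t < T -> G_measurable (F t) (C t T).
Proof. by move=> t0 tT; case: (hC t0 tT). Qed.
Let C_integrable t T D : 0 <= t -> t < T -> measurable D ->
  P.-integrable D (EFin \o C t T).
Proof. by move=> t0 tT mD; case: (hC t0 tT) => _ + _; exact: integrableS. Qed.
Let integral_C t T A : 0 <= t -> t < T -> F t A ->
  (\int[P]_(w in A) (C t T w)%:E = \int[P]_(w in A) (pi T w)%:E)%E.
Proof. by move=> t0 tT; case: (hC t0 tT) => _ _; exact. Qed.

Lemma C_gt0 t T : 0 <= t -> t < T -> \forall w \ae P, 0 < C t T w.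
Proof.
move=> t0 tT; have T0 : 0 <= T by exact: le_trans (ltW tT).
pose A := C t T @^-1` `]-oo, 0].
have FA : F t A by apply: C_adapted => //; exact: measurable_itv.
have mA := F_measurable t0 FA.
have PA0 : P A = 0%E.
  apply: (integral_gt0_le0_null (f := pi T) mA).
  - exact: measurable_int (pi_integrable T0 mA).
  - by move=> w _; exact: pi_gt0.
  rewrite -(integral_C t0 tT FA) -(integral0 P A); apply: le_integral => //.
  - exact: C_integrable.
  - exact: integrable0.
  by move=> w /set_mem; rewrite /A /= in_itv /= lee_fin.
exists A; split => // w /= /negP; rewrite -leNgt => C0.
by rewrite /A /= in_itv.
Qed.

Lemma F_C_le_pi s T k : 0 <= s -> s < T -> F s [set w | C s T w <= k * pi s w].
Proof.
move=> s0 sT; rewrite (_ : [set w | _] = (fun w => C s T w - k * pi s w) @^-1` `]-oo, 0]).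
  apply: (G_measurableP (F_sigma s0) _).2 _ _ (measurable_itv _).
  apply: measurable_funB; first exact/G_measurableP/C_adapted.
  by apply: measurable_funM => //; exact/G_measurableP/pi_adapted.
by apply/seteqP; split => w /=; rewrite in_itv /= subr_le0.
Qed.

Lemma integral_piT_ge t T m B D : 0 <= t -> t < T -> F t B -> F t D ->
  (\forall w \ae P, B w -> m * pi t w <= C t T w) ->
  (m%:E * \int[P]_(w in D `&` B) (pi t w)%:E <= \int[P]_(w in D) (pi T w)%:E)%E.
Proof.
move=> t0 tT FB FDt [N [mN N0 hN]].
have T0 : 0 <= T by exact: le_trans (ltW tT).
have FDB := F_setI t0 FDt FB; have mDB := F_measurable t0 FDB.
have mDBN := measurableD mDB mN.
apply: (@le_trans _ _ (\int[P]_(w in D `&` B) (pi T w)%:E)%E); last first.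
  exact: integral_pi_subset T0 mDB (F_measurable t0 FDt) (@subIsetl _ _ _).
rewrite -(integral_C t0 tT FDB) -integralZl //; last exact: pi_integrable.
rewrite (negligible_integral mN mDB (integrableZl _ _ (pi_integrable t0 mDB))) //.
rewrite [leRHS](negligible_integral mN mDB (C_integrable t0 tT mDB)) //.
apply: le_integral => //; first exact: integrableZl (pi_integrable t0 mDBN).
  exact: C_integrable.
move=> w /set_mem [[_ Bw] Nw] /=; rewrite lee_fin.
by apply: contrapT => mC; apply: Nw; apply: hN => /(_ Bw).
Qed.

Lemma C_le_pi_null s t T k m dl B V : 0 <= s -> s < t -> t < T ->
  F t B -> F s V -> 0 < dl -> 0 <= m -> k < dl * m ->
  (forall A, F s A -> A `<=` V ->
     (dl%:E * \int[P]_(w in A) (pi s w)%:E <= \int[P]_(w in A `&` B) (pi t w)%:E)%E) ->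
  (\forall w \ae P, B w -> m * pi t w <= C t T w) ->
  P (V `&` [set w | C s T w <= k * pi s w]) = 0%E.
Proof.
move=> s0 st tT FB FV dl0 m0 k_lt hahn mC.
have sT : s < T by exact: lt_trans tT.
set D := _ `&` _; have FD : F s D by exact/F_setI/F_C_le_pi.
have mD := F_measurable s0 FD.
have upper : (\int[P]_(w in D) (pi T w)%:E <= k%:E * \int[P]_(w in D) (pi s w)%:E)%E.
  rewrite -(integral_C s0 sT FD) -integralZl //; last exact: pi_integrable.
  apply: le_integral => //; first exact: C_integrable.
    exact: integrableZl (pi_integrable s0 mD).
  by move=> w /set_mem [_ /= ?]; rewrite lee_fin.
have lower : ((dl * m)%:E * \int[P]_(w in D) (pi s w)%:E <=
              \int[P]_(w in D) (pi T w)%:E)%E.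
  apply: le_trans (integral_piT_ge (t := t) _ tT FB (F_mono s0 (ltW st) FD) mC).
    by rewrite mulrC EFinM -muleA lee_wpmul2l ?lee_fin ?hahn //; exact: subIsetl.
  exact: le_trans s0 (ltW st).
apply: (integral_gt0_le0_null (f := pi s) mD).
- exact: measurable_int (pi_integrable s0 mD).
- by move=> w _; exact: pi_gt0.
have := le_trans lower upper; have := integral_pi_ge0 D s0.
rewrite -(fineK (integrable_fin_num mD (pi_integrable s0 mD))) -!EFinM !lee_fin.
by move: (fine _) => I I0 le; nra.
Qed.

Lemma exp_rate_lt_transfer s t T q q' dl B V : 0 <= s -> s < t -> t < T ->
  F t B -> F s V -> 0 < dl ->
  (forall A, F s A -> A `<=` V ->
     (dl%:E * \int[P]_(w in A) (pi s w)%:E <= \int[P]_(w in A `&` B) (pi t w)%:E)%E) ->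
  (\forall w \ae P, B w -> exp_rate pi (C t T) t T w < q) ->
  expR (- (T - s) * q') < dl * expR (- (T - t) * q) ->
  \forall w \ae P, V w -> exp_rate pi (C s T) s T w < q'.
Proof.
move=> s0 st tT FB FV dl0 hahn rate_t gap.
have t0 : 0 <= t by exact: le_trans s0 (ltW st).
have sT : s < T by exact: lt_trans tT.
have mC : \forall w \ae P, B w -> expR (- (T - t) * q) * pi t w <= C t T w.
  apply: filterS2 (C_gt0 t0 tT) rate_t => w C0 rate Bw.
  by apply: ltW; rewrite -exp_rate_ltE ?subr_gt0 ?pi_gt0 //; exact: (rate Bw).
have null := C_le_pi_null s0 st tT FB FV dl0 (ltW (expR_gt0 _)) gap hahn mC.
exists (V `&` [set w | C s T w <= expR (- (T - s) * q') * pi s w]); split => //.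
  exact/F_measurable/F_setI/F_C_le_pi.
move=> w /= not_rate; apply: contrapT => not_le; apply: not_rate => Vw.
have kC : expR (- (T - s) * q') * pi s w < C s T w.
  by rewrite ltNge; apply/negP => le; exact: not_le.
rewrite /exp_rate exp_rate_ltE ?subr_gt0 ?pi_gt0 //.
exact: lt_trans (mulr_gt0 (expR_gt0 _) (pi_gt0 w s0)) kC.
Qed.

(* [W] plays the role of the event where E[pi_t 1_B | F_s] >= dl pi_s. *)
Lemma Hahn_pi_comparison s t dl B : 0 <= s -> 0 <= t -> F t B -> exists W, [/\ F s W,
  (forall A, F s A -> A `<=` W ->
     (dl%:E * \int[P]_(w in A) (pi s w)%:E <= \int[P]_(w in A `&` B) (pi t w)%:E)%E) &
  (forall A, F s A -> A `<=` ~` W ->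
     (\int[P]_(w in A `&` B) (pi t w)%:E <= dl%:E * \int[P]_(w in A) (pi s w)%:E)%E)].
Proof.
move=> s0 t0 FB; have mB := F_measurable t0 FB.
pose g w := (((EFin \o pi t) \_ B) w - dl%:E * (pi s w)%:E)%E.
have int_piB A : measurable A -> P.-integrable A ((EFin \o pi t) \_ B).
  move=> mA; apply: integrableS (_ : P.-integrable setT _) => //.
  by apply/(integrable_mkcond _ mB); exact: pi_integrable.
have int_pis A : measurable A -> P.-integrable A (fun w => dl%:E * (pi s w)%:E)%E.
  by move=> mA; apply: integrableZl => //; exact: pi_integrable.
have int_g : P.-integrable setT g.
  by apply: integrableB => //; [exact: int_piB | exact: int_pis].
have integral_g A : F s A -> (\int[P]_(w in A) g w =
    \int[P]_(w in A `&` B) (pi t w)%:E - dl%:E * \int[P]_(w in A) (pi s w)%:E)%E.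
  move=> /(F_measurable s0) mA.
  rewrite integralB //; [|exact: int_piB|exact: int_pis].
  by rewrite -integral_mkcondr integralZl //; exact: pi_integrable.
have [W [FW W_pos W_neg]] :=
  Hahn_decomposition_sub (F_sigma s0) (F_measurable s0) (induced_charge int_g).
exists W; split => // A FA AW.
  have : (0 <= \int[P]_(w in A) g w)%E := W_pos A FA AW.
  rewrite integral_g // sube_ge0 //; apply/orP; left; apply: fin_numM => //.
  have mA := F_measurable s0 FA.
  by have /(integrable_fin_num mA) := pi_integrable s0 mA.
have : (\int[P]_(w in A) g w <= 0)%E := W_neg A FA AW.
by rewrite integral_g // sube_le0.
Qed.

Section horizon.
Variables (s t x : R) (Ls X : Omega -> \bar R).
Hypotheses (s0 : 0 <= s) (st : s < t) (hLs : long_rate P F pi C s Ls)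
  (X_ub : forall T, t < T -> x <= T ->
     \forall w \ae P, ((exp_rate pi (C t T) t T w)%:E <= X w)%E).

Let t0 : 0 <= t. Proof. exact: le_trans s0 (ltW st). Qed.

Lemma rate_gap_null q q' dl B V : q < q' -> 0 < dl ->
  F t B -> (forall w, B w -> (X w < q%:E)%E) ->
  F s V -> (forall w, V w -> (q'%:E < Ls w)%E) ->
  (forall A, F s A -> A `<=` V ->
     (dl%:E * \int[P]_(w in A) (pi s w)%:E <= \int[P]_(w in A `&` B) (pi t w)%:E)%E) ->
  P V = 0%E.
Proof.
move=> qq' dl0 FB BX FV VLs hahn.
pose q'' := (q + q') / 2.
have qq'' : q < q'' by rewrite /q''; lra.
have q''q' : q'' < q' by rewrite /q''; lra.
have [x1 gap] := expR_gap_eventually s t qq'' dl0.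
pose x' := Num.max (Num.max x (t + 1)) (Num.max x1 0).
have Ls_le : \forall w \ae P, V w -> (Ls w <= q''%:E)%E.
  apply: (is_ess_limsup_le_on (F_sigma s0) hLs FV (x0 := x')) => [|T sT x'T].
    by rewrite !le_max lexx !orbT.
  move: x'T; rewrite !ge_max => /andP[/andP[xT tT] /andP[x1T _]].
  have {}tT : t < T by lra.
  apply: filterS (exp_rate_lt_transfer s0 st tT FB FV dl0 hahn _ (gap T x1T)).
    by move=> w rate Vw; rewrite lee_fin ltW ?rate.
  apply: filterS (X_ub tT xT) => w rateX Bw.
  by rewrite -lte_fin; exact: le_lt_trans rateX (BX w Bw).
apply/(negligibleP P (F_measurable s0 FV)).
case: Ls_le => N [mN N0 sub]; exists N; split => // w Vw; apply: sub => /= /(_ Vw).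
by move=> /(lt_le_trans (VLs w Vw)); rewrite lte_fin; lra.
Qed.

Lemma integral_pi_gap_le q q' dl B E : q < q' -> 0 < dl ->
  F t B -> (forall w, B w -> (X w < q%:E)%E) ->
  F s E -> (forall w, E w -> (q'%:E < Ls w)%E) ->
  (\int[P]_(w in E `&` B) (pi t w)%:E <= dl%:E * \int[P]_w (pi s w)%:E)%E.
Proof.
move=> qq' dl0 FB BX FE ELs.
have [W [FW W_ge W_le]] := Hahn_pi_comparison dl s0 t0 FB.
have FWE := F_setI s0 FW FE; have FEW := F_setD s0 FE FW.
have WE_null : P (W `&` E) = 0%E.
  apply: (rate_gap_null qq' dl0 FB BX FWE) => [w [_ /ELs] //|A FA AWE].
  exact: W_ge A FA (fun w h => (AWE w h).1).
have mEB := measurableI _ _ (F_measurable s0 FE) (F_measurable t0 FB).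
rewrite (ge0_negligible_integral (f := fun w => (pi t w)%:E) (F_measurable s0 FWE) mEB) //;
  first last.
- by move=> w _; rewrite lee_fin ltW ?pi_gt0.
- exact: measurable_int (pi_integrable t0 mEB).
apply: le_trans (integral_pi_subset t0 _ _ _) (le_trans (W_le _ FEW (fun w h => h.2)) _).
- exact: measurableD mEB (F_measurable s0 FWE).
- exact: measurableI _ _ (F_measurable s0 FEW) (F_measurable t0 FB).
- by move=> w [[Ew Bw] nWE]; split => //; split => // Ww; apply: nWE.
apply: lee_wpmul2l; first by rewrite lee_fin ltW.
exact: integral_pi_subset s0 (F_measurable s0 FEW) measurableT (@subsetT _ _).
Qed.

Lemma long_rate_le_ub : G_emeasurable (F t) X -> \forall w \ae P, (Ls w <= X w)%E.
Proof.
move=> mX; have [_ [_ [mLs _ _]]] := hLs.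
apply: ae_le_of_rat_gaps => a b ab.
pose B := X @^-1` `]-oo, (ratr a)%:E[; pose E := Ls @^-1` `](ratr b)%:E, +oo[.
have FB : F t B := mX _ (emeasurable_itv _).
have FE : F s E := mLs _ (emeasurable_itv _).
have BX w : B w -> (X w < (ratr a)%:E)%E by rewrite /B /= in_itv.
have ELs w : E w -> ((ratr b)%:E < Ls w)%E by rewrite /E /= in_itv /= andbT.
have FEB := F_setI t0 (F_mono s0 (ltW st) FE) FB.
have mEB := F_measurable t0 FEB.
have EB_null : P (E `&` B) = 0%E.
  apply: (integral_gt0_le0_null (f := pi t) mEB).
  - exact: measurable_int (pi_integrable t0 mEB).
  - by move=> w _; exact: pi_gt0.
  have fin_s := integrable_fin_num measurableT (pi_integrable s0 measurableT).
  have fin_EB := integrable_fin_num mEB (pi_integrable t0 mEB).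
  rewrite -(fineK fin_EB) lee_fin.
  apply: (le0_of_le_small_mul (fine_ge0 (integral_pi_ge0 setT s0))) => e e0.
  rewrite -lee_fin EFinM !fineK //.
  exact: integral_pi_gap_le ab e0 FB BX FE ELs.
exists (E `&` B); split => //.
by move=> w /= /contrapT [/= Xa bLs]; split; rewrite /E /B /= in_itv //= andbT.
Qed.

End horizon.
End pricing_kernel.

Theorem proposition5 (R : realType) (d : measure_display) (Omega : measurableType d)
    (P : probability Omega R) (F : R -> set (set Omega)) (pi : R -> Omega -> R)
    (C : R -> R -> Omega -> R) (Lt : R -> Omega -> \bar R) :
  usual_filtration P F ->
  pricing_kernel P F pi ->
  (forall t T, 0 <= t -> t < T -> cond_exp_version P (F t) (pi T) (C t T)) ->
  (forall t, 0 <= t -> long_rate P F pi C t (Lt t)) ->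
  forall s t, 0 <= s -> s <= t ->
    \forall w \ae P, (Lt s w <= Lt t w)%E.
Proof.
move=> hF hpk hC hL s t s0; rewrite le_eqVlt => /predU1P[<-|st].
  by apply: aeW => w.
have t0 : 0 <= t by exact: le_trans s0 (ltW st).
have [_ [_ [mLs _ _]]] := hL s s0.
have [S [S_sup [_ _ S_greatest]]] := hL t t0.
apply: S_greatest => [B mB|x x0].
  by case: hF => _ _ F_mono _ _; exact: F_mono s0 (ltW st) _ (mLs B mB).
have [mS S_ub _] := S_sup x x0.
apply: (long_rate_le_ub (x := x) hF hpk hC s0 st (hL s s0) _ mS) => T tT xT.
exact: S_ub T (conj tT xT).
Qed.
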